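(* Let $d=\mu_+-\mu_-$, $\epsilon\in[0,d/4]$ and $K\in(1,\bar B_K(\epsilon))$, where $\bar B_K(\epsilon)=\min\{\exp((d-2\epsilon)^2/2),\ \phi^{-1}(d/\epsilon-2)\}$, $\phi:[1,\infty)\to[2,\infty)$, $\phi(x)=x+1/x$ (with $\phi^{-1}(+\infty):=+\infty$ when $\epsilon=0$). Define $$g(\epsilon;\theta,K)=\frac1K\exp\!\left(-\frac{(\theta+\epsilon-\mu_+)^2}{2K^2}\right)-\exp\!\left(-\frac{(\theta-\epsilon-\mu_-)^2}{2}\right).$$ Then for every $\theta\in[\theta_{\mathrm f},\theta^{(\epsilon)}_{\mathrm r}]$, $g(\epsilon;\theta,K)\le g(0;\theta,K)$.
   Context: Setting (one-dimensional Gaussian mixture). Fix real numbers $\mu_-<\mu_+$ and $K>1$, and let $d=\mu_+-\mu_-$. Let $(X,Y)$ be a random pair with $\Pr(Y=1)=\Pr(Y=-1)=\tfrac12$, $X\mid Y=-1\sim\mathcal N(\mu_-,1)$, and $X\mid Y=1\sim\mathcal N(\mu_+,K^2)$. For $\theta\in\mathbb R$, $f_\theta(x)=1$ if $x>\theta$ and $f_\theta(x)=-1$ otherwise. Class-conditional errors: $e_+(\theta)=\Pr(X\le\theta\mid Y=1)$, $e_-(\theta)=\Pr(X>\theta\mid Y=-1)$. For $\epsilon\ge0$, robust error: $R_{\mathrm{rob}}^{\epsilon}(\theta)=\tfrac12\Pr(X\le\theta+\epsilon\mid Y=1)+\tfrac12\Pr(X>\theta-\epsilon\mid Y=-1)$.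 $\theta_{\mathrm f}$ is the threshold in $[\mu_-,\mu_+]$ with $e_+(\theta_{\mathrm f})=e_-(\theta_{\mathrm f})$ (explicitly $\theta_{\mathrm f}=\mu_-+d/(K+1)$); $\theta^{(\epsilon)}_{\mathrm r}$ is the minimizer of $R^{\epsilon}_{\mathrm{rob}}$ over $[\mu_-,\mu_+]$. *)

From HB Require Import structures.
From mathcomp Require Import all_boot all_order all_algebra.
From mathcomp Require Import all_classical all_reals all_analysis.
Set Implicit Arguments. Unset Strict Implicit. Unset Printing Implicit Defensive.
Import Order.TTheory GRing.Theory Num.Theory.
Local Open Scope classical_set_scope.
Local Open Scope ring_scope.

Section GaussMixture.
Variable R : realType.

(* Pr(X <= t | Y = 1), with X | Y=1 ~ N(mup, K^2) *)
Definition prob_le_pos (mup K t : R) : R :=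
  fine (normal_prob mup K [set` `]-oo, t]]).

(* Pr(X > t | Y = -1), with X | Y=-1 ~ N(mum, 1) *)
Definition prob_gt_neg (mum t : R) : R :=
  fine (normal_prob mum 1 [set` `]t, +oo[]).

Definition e_pos (mup K theta : R) : R := prob_le_pos mup K theta.
Definition e_neg (mum theta : R) : R := prob_gt_neg mum theta.

Definition R_rob (mum mup K eps theta : R) : R :=
  2^-1 * prob_le_pos mup K (theta + eps) + 2^-1 * prob_gt_neg mum (theta - eps).

Definition theta_f (mum mup K : R) : R := mum + (mup - mum) / (K + 1).

Definition is_rob_minimizer (mum mup K eps t : R) : Prop :=
  mum <= t <= mup /\
  forall s, mum <= s <= mup -> R_rob mum mup K eps t <= R_rob mum mup K eps s.

(* inverse of phi(x) = x + 1/x : [1,oo) -> [2,oo), defined for y >= 2 *)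
Definition phi_inv (y : R) : R := (y + Num.sqrt (y ^+ 2 - 4)) / 2.

Definition g_fun (mum mup K eps theta : R) : R :=
  K^-1 * expR (- (theta + eps - mup) ^+ 2 / (2 * K ^+ 2))
  - expR (- (theta - eps - mum) ^+ 2 / 2).

End GaussMixture.

(** Write [g_eps] for [g(ε; ·, K)]. Up to the positive constant [normal_peak 1], [g_eps θ]
    is the difference of the two class densities entering [R_rob] at [θ + ε] and [θ - ε],
    so comparing integrals shows that [R_rob] is nondecreasing on every interval where
    [g_eps >= 0]. On [[μ- + ε, +∞)] the ratio of the two terms of [g_eps] is nondecreasing,
    so [g_eps] changes sign at most once there, from negative to positive. If
    [g_eps θ > 0] for some [θ <= θ_r], a zero [c < θ] of [g_eps] would be a second
    minimizer of [R_rob]; hence [g_eps <= 0] on [[θ_f, θ_r]]. Finally, writing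
    [g_eps θ = a - b] with [0 <= a <= b], one gets [g_0 θ = a e^{-X} - b e^{-Y}], and
    [K < φ^{-1}(d/ε - 2)], i.e. [ε (K + 1)^2 < d K], gives [0 <= X <= Y], whence
    [g_eps θ <= g_0 θ]. *)
From HB Require Import structures.
From mathcomp Require Import all_boot all_order all_algebra.
From mathcomp Require Import all_classical all_reals all_analysis.
From mathcomp Require Import ring lra measurable_realfun.
Set Implicit Arguments. Unset Strict Implicit. Unset Printing Implicit Defensive.
Import Order.TTheory GRing.Theory Num.Theory numFieldNormedType.Exports.
Local Open Scope ring_scope.

Section NormalProb.
Context {R : realType}.
Notation mu := (@lebesgue_measure R).
Implicit Types m s c x y : R.

Lemma measurable_normal_pdf_shift m s c (D : set R) :
  measurable_fun D (fun z => (normal_pdf m s (z + c))%:E).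
Proof.
apply/measurable_EFinP/measurable_funTS.
exact: measurableT_comp (measurable_normal_pdf m s) (measurable_funD _ _).
Qed.

Lemma integral_normal_pdf_shift m s c x y : s != 0 -> x <= y ->
  (\int[mu]_(z in `[(x + c)%R, (y + c)%R]) (normal_pdf m s z)%:E =
   \int[mu]_(z in `[x, y]) (normal_pdf m s (z + c))%:E)%E.
Proof.
move=> s0 xy.
have shift' : (fun z : R => z + c)^`()%classic = cst 1.
  by apply/funext => z; rewrite derive1E deriveD // derive_id derive_cst addr0.
rewrite (@integration_by_substitution_increasing R (fun z => z + c)) // ?shift'.
- by apply: eq_integral => z _; rewrite mulr1.
- by move=> a b _ _ ab; rewrite ltrD2r.
- by move=> z _; exact: cvg_cst.
- exact: is_cvg_cst.
- exact: is_cvg_cst.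
- split.
  + by move=> z _; exact: derivableD.
  + by apply: cvg_at_right_filter; apply: cvgD; [exact: cvg_id | exact: cvg_cst].
  + by apply: cvg_at_left_filter; apply: cvgD; [exact: cvg_id | exact: cvg_cst].
- exact: (@continuous_subspaceT R^o R^o _ _ (@continuous_normal_pdf R m s s0)).
Qed.

Lemma normal_prob_itv_integral m s x y :
  normal_prob m s [set` `]x, y]] = (\int[mu]_(z in `[x, y]) (normal_pdf m s z)%:E)%E.
Proof.
rewrite /normal_prob integral_itv_obnd_cbnd //.
apply/measurable_EFinP; apply: measurable_funTS; exact: measurable_normal_pdf.
Qed.

Lemma normal_prob_itv_shift_le (m1 m2 s1 s2 c1 c2 x y : R) :
  s1 != 0 -> s2 != 0 -> x <= y ->
  (forall z, x <= z <= y -> normal_pdf m1 s1 (z + c1) <= normal_pdf m2 s2 (z + c2)) ->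
  fine (normal_prob m1 s1 [set` `](x + c1), (y + c1)]]) <=
  fine (normal_prob m2 s2 [set` `](x + c2), (y + c2)]]).
Proof.
move=> s10 s20 xy pdf_le.
apply: fine_le; rewrite ?fin_num_measure //.
rewrite !normal_prob_itv_integral !integral_normal_pdf_shift //.
apply: ge0_le_integral.
- exact: measurable_itv.
- by move=> z _; rewrite lee_fin normal_pdf_ge0.
- exact: measurable_normal_pdf_shift.
- exact: measurable_normal_pdf_shift.
- by move=> z /=; rewrite in_itv /= lee_fin => /pdf_le.
Qed.

Lemma normal_prob_Iic_split m s x y : x <= y ->
  fine (normal_prob m s [set` `]-oo, y]]) =
  fine (normal_prob m s [set` `]-oo, x]]) + fine (normal_prob m s [set` `]x, y]]).
Proof.
move=> xy; rewrite (@itv_bndbnd_setU _ _ _ (BRight x)) ?bnd_simp //.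
rewrite measureU //; first by rewrite fineD ?fin_num_measure.
apply/seteqP; split => z //=; rewrite /setI /= !in_itv /=.
by move=> [] /=; rewrite ?andbT => ? ?; lra.
Qed.

Lemma normal_prob_Ioi_split m s x y : x <= y ->
  fine (normal_prob m s [set` `]x, +oo[]) =
  fine (normal_prob m s [set` `]x, y]]) + fine (normal_prob m s [set` `]y, +oo[]).
Proof.
move=> xy; rewrite (@itv_bndbnd_setU _ _ _ (BRight y)) ?bnd_simp //.
rewrite measureU //; first by rewrite fineD ?fin_num_measure.
apply/seteqP; split => z //=; rewrite /setI /= !in_itv /=.
by move=> [] /=; rewrite ?andbT => ? ?; lra.
Qed.

Lemma normal_peak_scale s : 0 < s -> normal_peak s = s^-1 * normal_peak 1.
Proof.
move=> s0; rewrite /normal_peak expr1n mul1r -mulrnAr sqrtrM ?sqr_ge0 // sqrtr_sqr.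
by rewrite gtr0_norm // invfM.
Qed.

End NormalProb.

Section GFun.
Context {R : realType}.
Implicit Types mum mup K eps x y t : R.

(* By [g_funE], [g_fun x] has the sign of [g_log_ratio x - ln K]. *)
Definition g_log_ratio mum mup K eps x :=
  (x - eps - mum) ^+ 2 / 2 - (x + eps - mup) ^+ 2 / (2 * K ^+ 2).

Lemma g_funE mum mup K eps x : 0 < K ->
  g_fun mum mup K eps x =
  expR (- (x - eps - mum) ^+ 2 / 2) * K^-1 * (expR (g_log_ratio mum mup K eps x) - K).
Proof.
move=> K0; have K0' : K != 0 by rewrite gt_eqF.
rewrite /g_fun; have -> : expR (- (x + eps - mup) ^+ 2 / (2 * K ^+ 2)) =
    expR (- (x - eps - mum) ^+ 2 / 2) * expR (g_log_ratio mum mup K eps x).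
  by rewrite -expRD /g_log_ratio; congr expR; ring.
by field.
Qed.

Lemma g_log_ratio_le mum mup K eps x y : 1 <= K -> 2 * eps <= mup - mum ->
  mum + eps <= x -> x <= y -> g_log_ratio mum mup K eps x <= g_log_ratio mum mup K eps y.
Proof.
move=> K1 de ex xy; have K0 : K != 0 by rewrite gt_eqF// (lt_le_trans ltr01 K1).
rewrite -subr_ge0 [_ - _](_ : _ = (y - x) *
  ((K ^+ 2 - 1) * (x + y - 2 * (mum + eps)) + 2 * (mup - mum - 2 * eps)) / (2 * K ^+ 2)).
  apply: divr_ge0; last nra.
  by apply: mulr_ge0; [lra | apply: addr_ge0; [apply: mulr_ge0 |]; nra].
by rewrite /g_log_ratio; field.
Qed.

Lemma g_fun_ge0_le mum mup K eps x y : 1 <= K -> 2 * eps <= mup - mum ->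
  mum + eps <= x -> x <= y -> 0 <= g_fun mum mup K eps x -> 0 <= g_fun mum mup K eps y.
Proof.
move=> K1 de ex xy; have K0 : 0 < K by exact: lt_le_trans ltr01 K1.
have scale_gt0 z : 0 < expR (- (z - eps - mum) ^+ 2 / 2) * K^-1.
  by rewrite mulr_gt0 ?expR_gt0 ?invr_gt0.
rewrite !g_funE // !pmulr_rge0 // !subr_ge0 => /le_trans; apply.
by rewrite ler_expR g_log_ratio_le.
Qed.

Lemma g_fun_lt0 mum mup K eps : 1 < K -> g_fun mum mup K eps (mum + eps) < 0.
Proof.
move=> K1; have K0 : 0 < K by exact: lt_trans ltr01 K1.
rewrite g_funE // pmulr_rlt0 ?mulr_gt0 ?expR_gt0 ?invr_gt0 // subr_lt0.
apply: le_lt_trans K1; rewrite -expR0 ler_expR /g_log_ratio.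
rewrite (_ : mum + eps - eps - mum = 0); last by ring.
by rewrite expr0n /= mul0r sub0r oppr_le0 divr_ge0 ?sqr_ge0 // mulr_ge0 ?sqr_ge0.
Qed.

Lemma normal_pdf_subE mum mup K eps x : 0 < K ->
  normal_pdf mup K (x + eps) - normal_pdf mum 1 (x - eps) =
  normal_peak 1 * g_fun mum mup K eps x.
Proof.
move=> K0; rewrite /normal_pdf gt_eqF // oner_eq0 /g_fun /normal_fun normal_peak_scale //.
by rewrite expr1n -mulr_natl; ring.
Qed.

Lemma continuous_g_fun mum mup K eps : 0 < K -> continuous (g_fun mum mup K eps).
Proof.
move=> K0 x.
have -> : g_fun mum mup K eps = fun z =>
    (normal_peak 1)^-1 * (normal_pdf mup K (z + eps) - normal_pdf mum 1 (z - eps)).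
  apply/funext => z; rewrite normal_pdf_subE // mulrA mulVf ?mul1r //.
  by rewrite gt_eqF // normal_peak_gt0 ?oner_neq0.
apply: cvgM; first exact: cvg_cst.
apply: cvgB.
- apply: (@continuous_comp R^o R^o R^o (fun z => z + eps) (normal_pdf mup K)).
    by apply: cvgD; [exact: cvg_id | exact: cvg_cst].
  by apply: continuous_normal_pdf; rewrite gt_eqF.
- apply: (@continuous_comp R^o R^o R^o (fun z => z - eps) (normal_pdf mum 1)).
    by apply: cvgB; [exact: cvg_id | exact: cvg_cst].
  exact/continuous_normal_pdf/oner_neq0.
Qed.

Lemma R_rob_le mum mup K eps x y : 0 < K -> x <= y ->
  (forall z, x <= z <= y -> 0 <= g_fun mum mup K eps z) ->
  R_rob mum mup K eps x <= R_rob mum mup K eps y.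
Proof.
move=> K0 xy g_ge0; rewrite /R_rob /prob_le_pos /prob_gt_neg.
rewrite (@normal_prob_Iic_split R mup K (x + eps) (y + eps)) ?lerD2r //.
rewrite (@normal_prob_Ioi_split R mum 1 (x - eps) (y - eps)) ?lerD2r //.
suff : fine (normal_prob mum 1 [set` `](x - eps), (y - eps)]]) <=
       fine (normal_prob mup K [set` `](x + eps), (y + eps)]]) by lra.
apply: normal_prob_itv_shift_le; rewrite ?oner_neq0 ?gt_eqF // => z /g_ge0 gz.
by rewrite -subr_ge0 normal_pdf_subE // pmulr_rge0 // normal_peak_gt0 ?oner_neq0.
Qed.

Lemma ler_sub_mulr_expN (a b X Y : R) : 0 <= a -> a <= b -> X <= Y -> 0 <= Y ->
  a - b <= a * expR (- X) - b * expR (- Y).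
Proof.
move=> a0 ab XY Y0.
have eYX : expR (- Y) <= expR (- X) by rewrite ler_expR lerN2.
have eY1 : expR (- Y) <= 1 by rewrite -expR0 ler_expR oppr_le0.
have eY0 : 0 < expR (- Y) by exact: expR_gt0.
have [X0|X0] := leP 0 X.
  have eX1 : expR (- X) <= 1 by rewrite -expR0 ler_expR oppr_le0.
  nra.
have eX1 : 1 <= expR (- X) by rewrite -expR0 ler_expR oppr_ge0 ltW.
nra.
Qed.

Lemma shift_exponent_le (d u K eps : R) : 1 < K -> 0 <= eps -> 0 <= d ->
  eps * (K + 1) ^+ 2 <= d * K -> d <= u * (K + 1) ->
  eps * (2 * (d - u) - eps) / (2 * K ^+ 2) <= eps * (2 * u - eps) / 2.
Proof.
move=> K1 e0 d0 edK du.
have K0 : 0 < K by exact: lt_trans ltr01 K1.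
(* Each summand is nonnegative: [u (K + 1) >= d] and [d K >= eps (K + 1)^2]. *)
have gap : 0 <= (K + 1) * (K ^+ 2 * (2 * u - eps) - (2 * (d - u) - eps)).
  rewrite [X in 0 <= X](_ : _ = 2 * (K ^+ 2 + 1) * (u * (K + 1) - d)
    + (K - 1) * (d * K - eps * (K + 1) ^+ 2) + (K - 1) * (d * K)); last by ring.
  by rewrite !addr_ge0 // !mulr_ge0 //; nra.
rewrite ler_pdivrMr ?mulr_gt0 ?exprn_gt0 //.
by move: gap; rewrite pmulr_rge0 ?addr_gt0 //; nra.
Qed.

Lemma g_fun_le_g_fun0 mum mup K eps t : 1 < K -> 0 <= eps ->
  eps * (K + 1) ^+ 2 <= (mup - mum) * K -> theta_f mum mup K <= t ->
  g_fun mum mup K eps t <= 0 -> g_fun mum mup K eps t <= g_fun mum mup K 0 t.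
Proof.
move=> K1 e0 edK tf; have K0 : 0 < K by exact: lt_trans ltr01 K1.
have K0' : K != 0 by rewrite gt_eqF.
set d := mup - mum in edK *; set u := t - mum.
have du : d <= u * (K + 1).
  by move: tf; rewrite /theta_f -lerBrDl -/u -ler_pdivrMr ?addr_gt0.
have d0 : 0 <= d by nra.
have eu : eps <= u by nra.
(* Removing [eps] lowers both Gaussian exponents: [(t - mup)^2 = (t + eps - mup)^2 + eps (2 (d - u) - eps)]
   and [(t - mum)^2 = (t - eps - mum)^2 + eps (2 u - eps)]. *)
rewrite /g_fun; set a := K^-1 * expR _; set b := expR (- (t - eps - mum) ^+ 2 / 2).
have -> : K^-1 * expR (- (t + 0 - mup) ^+ 2 / (2 * K ^+ 2)) - expR (- (t - 0 - mum) ^+ 2 / 2)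
    = a * expR (- (eps * (2 * (d - u) - eps) / (2 * K ^+ 2))) -
      b * expR (- (eps * (2 * u - eps) / 2)).
  by rewrite /a /b -mulrA -!expRD /d /u; congr (_ * expR _ - expR _); field.
rewrite subr_le0 => ab.
apply: ler_sub_mulr_expN => //; first by rewrite mulr_ge0 ?invr_ge0 ?expR_ge0 ?ltW.
  exact: shift_exponent_le.
by rewrite divr_ge0 //; nra.
Qed.

End GFun.

Section PhiInverse.
Context {R : realType}.

Lemma sqrD1_lt_of_lt_phi_inv (y K : R) : 2 <= y -> 1 < K -> K < phi_inv y ->
  K ^+ 2 + 1 < y * K.
Proof.
move=> y2 K1; rewrite /phi_inv; set r := Num.sqrt _ => Kr.
have r0 : 0 <= r by exact: sqrtr_ge0.
have r2 : r ^+ 2 = y ^+ 2 - 4 by rewrite sqr_sqrtr //; nra.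
have yr : y - 2 <= r.
  rewrite -(ler_pXn2r (n := 2)) ?nnegrE //; last lra.
  by rewrite r2; nra.
nra.
Qed.

Lemma eps_bound_of_lt_phi_inv (d K eps : R) : 0 < eps -> 4 * eps <= d -> 1 < K ->
  K < phi_inv (d / eps - 2) -> eps * (K + 1) ^+ 2 < d * K.
Proof.
move=> e0 e4 K1; set y := d / eps - 2 => Ky.
have dE : d = (y + 2) * eps by rewrite /y; field; rewrite gt_eqF.
have y2 : 2 <= y by move: e4; rewrite dE; nra.
have := sqrD1_lt_of_lt_phi_inv y2 K1 Ky.
by rewrite dE; nra.
Qed.

End PhiInverse.

Lemma g_fun_le0_of_rob_minimizer (R : realType) (mum mup K eps theta_r theta : R) :
  1 < K -> 0 <= eps -> 2 * eps <= mup - mum ->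
  is_rob_minimizer mum mup K eps theta_r ->
  (forall t, is_rob_minimizer mum mup K eps t -> t = theta_r) ->
  mum + eps <= theta -> theta <= theta_r -> g_fun mum mup K eps theta <= 0.
Proof.
move=> K1 e0 de [/andP[_ r_le] r_min] r_uniq e_le le_r.
have K0 : 0 < K by exact: lt_trans ltr01 K1.
rewrite leNgt; apply/negP => g_pos.
have [c] : exists2 c, c \in `[mum + eps, theta] & g_fun mum mup K eps c = 0.
  apply: IVT => //; first exact/continuous_subspaceT/continuous_g_fun.
  by rewrite ge_min le_max (ltW (g_fun_lt0 mum mup eps K1)) (ltW g_pos) orbT.
rewrite in_itv /= => /andP[e_le_c c_le] gc0.
have c_lt : c < theta.
  by rewrite lt_neqAle c_le andbT; apply: contraTneq g_pos => <-; rewrite gc0 ltxx.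
have c_min : is_rob_minimizer mum mup K eps c.
  split; first by apply/andP; split; lra.
  move=> s s_in; apply: le_trans (r_min s s_in).
  apply: R_rob_le => // [|z /andP[cz _]]; first lra.
  by apply: (g_fun_ge0_le (ltW K1) de e_le_c cz); rewrite gc0.
by move: c_lt; rewrite (r_uniq c c_min) ltNge le_r.
Qed.

Theorem mainTheorem6 (R : realType) (mum mup K eps theta_r : R) :
  mum < mup ->
  0 <= eps -> eps <= (mup - mum) / 4 ->
  1 < K ->
  K < expR ((mup - mum - 2 * eps) ^+ 2 / 2) ->
  (0 < eps -> K < phi_inv ((mup - mum) / eps - 2)) ->
  is_rob_minimizer mum mup K eps theta_r ->
  (forall t, is_rob_minimizer mum mup K eps t -> t = theta_r) ->
  forall theta, theta_f mum mup K <= theta <= theta_r ->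
    g_fun mum mup K eps theta <= g_fun mum mup K 0 theta.
Proof.
move=> _ e0 e_le K1 _ K_phi r_min r_uniq theta /andP[f_le le_r].
have [-> //|e_neq0] := eqVneq eps 0.
have e_gt0 : 0 < eps by rewrite lt_neqAle eq_sym e_neq0.
have e4 : 4 * eps <= mup - mum by move: e_le; rewrite ler_pdivlMr //; lra.
have eK := eps_bound_of_lt_phi_inv e_gt0 e4 K1 (K_phi e_gt0).
have e_le_f : mum + eps <= theta_f mum mup K.
  by rewrite /theta_f lerD2l ler_pdivlMr ?addr_gt0 //; nra.
apply: g_fun_le_g_fun0 => //; first exact: ltW.
apply: (g_fun_le0_of_rob_minimizer K1 e0 _ r_min r_uniq) => //; first lra.
exact: le_trans f_le.
Qed.
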